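(* Let $A$ be a binary ($\{0,1\}$-valued) $n\times m$ matrix, let $R$ be either the binary rank $R_{binary}$ or the boolean rank $R_{bool}$, and let $k=R(A)$. Bases and spanning below are taken in the binary sense if $R=R_{binary}$ and in the boolean sense if $R=R_{bool}$. (1) If $A$ has a base that spans all other bases of $A$, then for every set of binary column vectors $x_1,\dots,x_t$ of length $n$ with $R(A|x_i)=k$ for all $1\le i\le t$, it also holds that $R(A|x_1,\dots,x_t)=k$. (2) If there is no base of $A$ that spans all other bases of $A$, then there exist binary column vectors $x_1,\dots,x_t$ of length $n$ such that $R(A|x_i)=k$ for all $1\le i\le t$, but $R(A|x_1,\dots,x_t)>k$. In particular, $A$ has the Augmentation property for $R$ if and only if $A$ has a base that spans all other bases of $A$.
   Context: Binary rank: for a binary $n\times m$ matrix $A$, $R_{binary}(A)$ is the least $k$ such that $A=UV$ with $U\in\{0,1\}^{n\times k}$, $V\in\{0,1\}^{k\times m}$, the product computed with ordinary real arithmetic. Boolean rank $R_{bool}(A)$: the same, except that the product is computed in the Boolean semiring ($1+1=1$, i.e. entrywise OR of ANDs). A set $X$ of $\{0,1\}$-vectors spans a vector $y$ in the binary sense if $y=\sum_{x\in X}c_x x$ for some coefficients $c_x\in\{0,1\}$ with ordinary addition, and in the boolean sense if the same holds with boolean addition ($1+1=1$). $X$ spans a set $Y$ if it spans every vector of $Y$. A base of $A$ (binary, resp. boolean) is a set of $\{0,1\}$ column vectors of length $n$ that spans all columns of $A$ and is a minimal spanning set, i.e. has minimum cardinality among such spanning sets. $(A|x_1,\dots,x_t)$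 denotes $A$ augmented with the columns $x_1,\dots,x_t$ appended on the right. A matrix $A$ has the Augmentation property for a rank function $R$ if for every collection of column vectors $x_1,\dots,x_t$ with $R(A|x_i)=R(A)$ for all $i$, also $R(A|x_1,\dots,x_t)=R(A)$. *)

From mathcomp Require Import all_boot all_algebra.
Set Implicit Arguments.
Unset Strict Implicit.
Unset Printing Implicit Defensive.

(* Which rank / spanning notion: binary (ordinary arithmetic over nat)
   or boolean (1+1=1, i.e. OR of ANDs). *)
Inductive rank_mode := Binary | Boolean.

(* A binary (0/1) matrix / vector is represented with entries in bool;
   (b : nat) is 1 if b is true and 0 otherwise. *)

Definition prod_entry_ok (md : rank_mode) (k : nat)
  (a : bool) (u : 'I_k -> bool) (v : 'I_k -> bool) : bool :=
  match md with
  | Binary => (a : nat) == \sum_(l < k) ((u l && v l) : nat)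
  | Boolean => a == [exists l, u l && v l]
  end.

Definition has_factorization (md : rank_mode) (n m : nat)
  (A : 'M[bool]_(n, m)) (k : nat) : bool :=
  [exists U : 'M[bool]_(n, k), exists V : 'M[bool]_(k, m),
     [forall i, forall j,
        prod_entry_ok md (A i j) (fun l => U i l) (fun l => V l j)]].

Lemma has_factorization_m (md : rank_mode) (n m : nat) (A : 'M[bool]_(n, m)) :
  exists k, has_factorization md A k.
Proof.
exists m; apply/existsP; exists A; apply/existsP.
exists (\matrix_(l, j) (l == j))%R; apply/forallP => i; apply/forallP => j.
case: md => /=.
- rewrite (bigD1 j) //= !mxE eqxx andbT big1 ?addn0 //.
  by move=> l /negbTE hl; rewrite !mxE hl andbF.
- apply/eqP; apply/idP/existsP.
  + by move=> h; exists j; rewrite !mxE eqxx h.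
  + by case=> l; rewrite !mxE => /andP [h /eqP <-].
Qed.

Definition mxrank01 (md : rank_mode) (n m : nat) (A : 'M[bool]_(n, m)) : nat :=
  ex_minn (has_factorization_m md A).

(* X spans y: y = sum_{x in X} c_x x with c_x in {0,1}, i.e. y is the
   (binary resp. boolean) sum of some subset S of X. *)
Definition spans (md : rank_mode) (n : nat)
  (X : {set 'cV[bool]_n}) (y : 'cV[bool]_n) : bool :=
  [exists S : {set 'cV[bool]_n}, (S \subset X) &&
     [forall i, match md with
                | Binary => (y i ord0 : nat) == \sum_(x in S) (x i ord0 : nat)
                | Boolean => y i ord0 == [exists x in S, x i ord0]
                end]].

Definition spans_set (md : rank_mode) (n : nat)
  (X Y : {set 'cV[bool]_n}) : Prop :=
  forall y, y \in Y -> spans md X y.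

Definition spans_cols (md : rank_mode) (n m : nat)
  (A : 'M[bool]_(n, m)) (X : {set 'cV[bool]_n}) : Prop :=
  forall j : 'I_m, spans md X (col j A).

Definition is_base (md : rank_mode) (n m : nat)
  (A : 'M[bool]_(n, m)) (B : {set 'cV[bool]_n}) : Prop :=
  spans_cols md A B /\
  forall B' : {set 'cV[bool]_n}, spans_cols md A B' -> #|B| <= #|B'|.

Definition has_universal_base (md : rank_mode) (n m : nat)
  (A : 'M[bool]_(n, m)) : Prop :=
  exists B, is_base md A B /\
    forall B', is_base md A B' -> spans_set md B B'.

Definition augment (n m t : nat) (A : 'M[bool]_(n, m))
  (x : 'I_t -> 'cV[bool]_n) : 'M[bool]_(n, m + t) :=
  row_mx A (\matrix_(i, j) x j i ord0)%R.

Definition augment1 (n m : nat) (A : 'M[bool]_(n, m))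
  (x : 'cV[bool]_n) : 'M[bool]_(n, m + 1) := row_mx A x.

Definition augmentation_property (md : rank_mode) (n m : nat)
  (A : 'M[bool]_(n, m)) : Prop :=
  forall (t : nat) (x : 'I_t -> 'cV[bool]_n),
    (forall i, mxrank01 md (augment1 A (x i)) = mxrank01 md A) ->
    mxrank01 md (augment A x) = mxrank01 md A.

From mathcomp Require Import all_boot all_algebra.
Set Implicit Arguments. Unset Strict Implicit. Unset Printing Implicit Defensive.

(* A factorization A = U V of inner dimension k is the same thing as k vectors
   (the columns of U) spanning the columns of A, so the rank is the least size
   of a spanning set and the bases are the spanning sets of that size. Spanning
   is transitive, hence (A | x_1, ..., x_t) has rank k exactly when a single
   base of A spans every x_i. If some base B spans all bases, each x_i with
   R(A | x_i) = k is spanned by a base of A, hence by B. Otherwise, augmenting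
   A by all vectors of all bases keeps each R(A | x_i) = k, but the whole
   augmentation has rank k only if some base spans every base vector, i.e.
   every base. *)

Lemma sum_imset_le (I T : finType) (f : I -> T) (P : {set I}) (g : T -> nat) :
  \sum_(x in f @: P) g x <= \sum_(l in P) g (f l).
Proof.
rewrite (partition_big_imset f); apply: leq_sum => x /imsetP [l Pl ->].
by rewrite (bigD1 l) /= ?Pl ?eqxx // leq_addr.
Qed.

(* A total of at most one forces each x with [p x] to be hit by at most one
   l in P, so merging the duplicates of the family does not change the sum. *)
Lemma sum_imset_bool (I T : finType) (f : I -> T) (P : {set I}) (p : pred T)
    (b : bool) :
  (b : nat) = \sum_(l in P) (p (f l) : nat) ->
  (b : nat) = \sum_(x in f @: P) (p x : nat).
Proof.
move=> sum_b; apply/eqP; rewrite eqn_leq.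
have -> : \sum_(x in f @: P) (p x : nat) <= b.
  by rewrite sum_b (sum_imset_le f P (fun x => (p x : nat))).
rewrite andbT.
have [/existsP [l /andP [Pl pfl]] | /existsPn no_l] :=
  boolP [exists l in P, p (f l)].
  by rewrite (leq_trans (leq_b1 b)) // (bigD1 (f l)) ?imset_f //= pfl.
rewrite sum_b big1 // => l Pl.
by move: (no_l l); rewrite Pl /= => /negbTE ->.
Qed.

Section Spanning.

Variable n : nat.
Implicit Types (md : rank_mode) (X Y S : {set 'cV[bool]_n}) (y z : 'cV[bool]_n).

Definition is_sum md S y : bool :=
  [forall i, match md with
             | Binary => (y i ord0 : nat) == \sum_(x in S) (x i ord0 : nat)
             | Boolean => y i ord0 == [exists x in S, x i ord0]
             end].

Lemma spansP md X y :
  reflect (exists2 S : {set 'cV[bool]_n}, S \subset X & is_sum md S y)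
          (spans md X y).
Proof.
apply: (iffP existsP) => [[S /andP [SX sumS]] | [S SX sumS]].
  by exists S.
by exists S; rewrite SX.
Qed.

Definition span_witness md X y : {set 'cV[bool]_n} :=
  odflt set0 [pick S : {set 'cV[bool]_n} | (S \subset X) && is_sum md S y].

Lemma span_witnessP md X y :
  spans md X y ->
  span_witness md X y \subset X /\ is_sum md (span_witness md X y) y.
Proof.
rewrite /span_witness; case: pickP => [S /andP [] // | none /existsP [S]].
by rewrite none.
Qed.

Lemma spans_mem md X y : y \in X -> spans md X y.
Proof.
move=> yX; apply/spansP; exists [set y]; rewrite ?sub1set //.
apply/forallP => i; case: md => /=; first by rewrite big_set1.
apply/eqP; apply/idP/existsP => [yi | [x /andP [/set1P -> //]]].
by exists y; rewrite set11.
Qed.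

Lemma spans_trans md X Y z : spans_set md X Y -> spans md Y z -> spans md X z.
Proof.
move=> spXY /spansP [S SY sumS].
have [T sumT] : exists T : 'cV[bool]_n -> {set 'cV[bool]_n},
    forall y, y \in S -> T y \subset X /\ is_sum md (T y) y.
  by exists (span_witness md X) => y yS; apply/span_witnessP/spXY/(subsetP SY).
pose P := [set p : 'cV[bool]_n * 'cV[bool]_n | (p.1 \in S) && (p.2 \in T p.1)].
apply/spansP; exists (snd @: P).
  apply/subsetP => v /imsetP [[y x]]; rewrite inE /= => /andP [yS xT] ->.
  by case: (sumT y yS) => /subsetP ->.
apply/forallP => i; move/forallP/(_ i): sumS.
case: md spXY sumT => _ sumT /= /eqP zi; apply/eqP.
- apply: (sum_imset_bool (p := fun x : 'cV[bool]_n => x i ord0)).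
  rewrite zi (eq_bigr (fun y => \sum_(x in T y) (x i ord0 : nat))).
    by rewrite pair_big_dep; apply: eq_bigl => p; rewrite inE.
  by move=> y yS; case: (sumT y yS) => _ /forallP /(_ i) /eqP.
- rewrite zi; apply/existsP/existsP => [[y /andP [yS yi]] |
                                         [v /andP [/imsetP [[y x]]]]].
    case: (sumT y yS) => _ /forallP /(_ i) /eqP; rewrite yi.
    move=> /esym /existsP [x /andP [xT xi]].
    by exists x; rewrite xi andbT; apply/imsetP; exists (y, x); rewrite ?inE ?yS.
  rewrite inE /= => /andP [yS xT] -> xi; exists y; rewrite yS /=.
  case: (sumT y yS) => _ /forallP /(_ i) /eqP ->.
  by apply/existsP; exists x; rewrite xT.
Qed.

End Spanning.

Section Rank.

Variables (n m : nat).
Implicit Types (md : rank_mode) (A : 'M[bool]_(n, m)) (B : {set 'cV[bool]_n}).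

Lemma has_factorization_spans md A k :
  has_factorization md A k -> exists2 B, spans_cols md A B & #|B| <= k.
Proof.
move=> /existsP [U /existsP [V /forallP UV_A]].
exists ((fun l => col l U) @: [set: 'I_k]); last first.
  by rewrite (leq_trans (leq_imset_card _ _)) // cardsT card_ord.
move=> j; apply/spansP; exists ((fun l => col l U) @: [set l | V l j]).
  by rewrite imsetS ?subsetT.
apply/forallP => i; move/forallP/(_ j): (UV_A i); rewrite mxE.
case: md UV_A => _ /= /eqP Aij; apply/eqP.
- apply: (sum_imset_bool (p := fun x : 'cV[bool]_n => x i ord0)).
  rewrite Aij [RHS]big_mkcond /=; apply: eq_bigr => l _.
  by rewrite inE !mxE; case: (V l j); rewrite ?andbT ?andbF.
- rewrite Aij; apply/existsP/existsP => [[l /andP [Uil Vlj]] |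
                                          [x /andP [/imsetP [l]]]].
    by exists (col l U); rewrite mxE Uil andbT; apply: imset_f; rewrite inE.
  by rewrite inE => Vlj ->; rewrite mxE => Uil; exists l; rewrite Uil Vlj.
Qed.

Lemma spans_has_factorization md A B :
  spans_cols md A B -> has_factorization md A #|B|.
Proof.
move=> spB.
have [S SB sumS] : exists2 S : 'I_m -> {set 'cV[bool]_n},
    forall j, S j \subset B & forall j, is_sum md (S j) (col j A).
  by exists (fun j => span_witness md B (col j A)) => j;
    case: (span_witnessP (spB j)).
apply/existsP; exists (\matrix_(i, l) (enum_val l : 'cV[bool]_n) i ord0)%R.
apply/existsP; exists (\matrix_(l, j) (enum_val l \in S j))%R.
apply/forallP => i; apply/forallP => j.
move/subsetP: (SB j) => {}SB; move/forallP/(_ i): (sumS j); rewrite mxE.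
case: md spB sumS => _ _ /= /eqP ->.
- pose F (x : 'cV[bool]_n) := (x i ord0 && (x \in S j) : nat).
  rewrite (eq_bigr (F \o enum_val)) => [|l _]; last by rewrite !mxE.
  rewrite -(big_enum_val (A := mem B) F); apply/eqP.
  rewrite big_mkcond [RHS]big_mkcond /=; apply: eq_bigr => x _; rewrite /F.
  by case: (boolP (x \in S j)) => [/SB -> | _]; rewrite ?andbT ?andbF ?if_same.
- apply/eqP; apply/existsP/existsP => [[x /andP [xS xi]] | [l]].
    by exists (enum_rank_in (SB x xS) x); rewrite !mxE enum_rankK_in ?xS ?xi ?SB.
  by rewrite !mxE => /andP [xi xS]; exists (enum_val l); rewrite xS xi.
Qed.

Lemma mxrank01_le_card md A B : spans_cols md A B -> mxrank01 md A <= #|B|.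
Proof.
move=> /spans_has_factorization fact_B.
by rewrite /mxrank01; case: ex_minnP => r _ ->.
Qed.

Lemma mxrank01_spans md A : exists2 B, spans_cols md A B & #|B| = mxrank01 md A.
Proof.
have [B spB cardB] : exists2 B, spans_cols md A B & #|B| <= mxrank01 md A.
  by apply: has_factorization_spans; rewrite /mxrank01; case: ex_minnP.
by exists B => //; apply/eqP; rewrite eqn_leq cardB mxrank01_le_card.
Qed.

Lemma card_base md A B : is_base md A B -> #|B| = mxrank01 md A.
Proof.
case=> spB minB; apply/eqP; rewrite eqn_leq mxrank01_le_card // andbT.
by have [B0 spB0 <-] := mxrank01_spans md A; apply: minB.
Qed.

Lemma spans_base md A B :
  spans_cols md A B -> #|B| <= mxrank01 md A -> is_base md A B.
Proof.
by move=> spB cardB; split=> // B' /mxrank01_le_card; apply: leq_trans.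
Qed.

End Rank.

Lemma augment1E n m (A : 'M[bool]_(n, m)) (x : 'cV[bool]_n) :
  augment1 A x = augment A (fun=> x).
Proof. by congr row_mx; apply/matrixP => i k; rewrite mxE (ord1 k). Qed.

Section Augmentation.

Variables (n m t : nat) (A : 'M[bool]_(n, m)) (x : 'I_t -> 'cV[bool]_n).
Implicit Types (md : rank_mode) (B : {set 'cV[bool]_n}).

Lemma col_augment_lshift j :
  col (lshift t j) (augment A x) = col j A.
Proof. by rewrite -col_lsubmx row_mxKl. Qed.

Lemma col_augment_rshift l :
  col (rshift m l) (augment A x) = x l.
Proof.
by rewrite -col_rsubmx row_mxKr; apply/matrixP => i k; rewrite !mxE (ord1 k).
Qed.

Lemma spans_cols_augment md B :
  spans_cols md (augment A x) B <->
  spans_cols md A B /\ forall l, spans md B (x l).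
Proof.
split=> [spB | [spA spx] j].
  split=> [j | l]; first by rewrite -col_augment_lshift; apply: spB.
  by rewrite -col_augment_rshift; apply: spB.
by rewrite -(splitK j); case: split => [j' | l];
  rewrite ?col_augment_lshift ?col_augment_rshift.
Qed.

Lemma mxrank01_augment_ge md :
  mxrank01 md A <= mxrank01 md (augment A x).
Proof.
have [B /spans_cols_augment [spB _] <-] := mxrank01_spans md (augment A x).
exact: mxrank01_le_card.
Qed.

Lemma mxrank01_augmentP md :
  mxrank01 md (augment A x) = mxrank01 md A <->
  exists2 B, is_base md A B & forall l, spans md B (x l).
Proof.
split=> [rank_eq | [B baseB spx]].
  have [B /spans_cols_augment [spB spx] cardB] := mxrank01_spans md (augment A x).
  by exists B => //; apply: spans_base; rewrite // cardB rank_eq.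
apply/eqP; rewrite eqn_leq mxrank01_augment_ge andbT -(card_base baseB).
by case: baseB => spB _; apply/mxrank01_le_card/spans_cols_augment.
Qed.

End Augmentation.

Section UniversalBase.

Variables (md : rank_mode) (n m : nat) (A : 'M[bool]_(n, m)).

Lemma universal_base_augmentation :
  has_universal_base md A -> augmentation_property md A.
Proof.
move=> [B [baseB univB]] t x rank_x.
apply/mxrank01_augmentP; exists B => // l.
have /mxrank01_augmentP [Bl baseBl spx] :
    mxrank01 md (augment A (fun _ : 'I_1 => x l)) = mxrank01 md A.
  by rewrite -augment1E rank_x.
exact: spans_trans (univB _ baseBl) (spx ord0).
Qed.

Definition is_baseb (B : {set 'cV[bool]_n}) : bool :=
  [forall j, spans md B (col j A)] &&
  [forall B' : {set 'cV[bool]_n},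
     [forall j, spans md B' (col j A)] ==> (#|B| <= #|B'|)].

Lemma is_baseP B : reflect (is_base md A B) (is_baseb B).
Proof.
apply: (iffP andP) => [[/forallP spB /forallP minB] | [spB minB]]; split=> //.
- by move=> B' /forallP spB'; apply: (implyP (minB B')).
- by apply/forallP.
- by apply/forallP => B'; apply/implyP => /forallP /minB.
Qed.

Definition base_vectors : {set 'cV[bool]_n} := \bigcup_(B | is_baseb B) B.

Definition enum_base_vectors : 'I_#|base_vectors| -> 'cV[bool]_n := enum_val.

Lemma mxrank01_augment1_base_vector l :
  mxrank01 md (augment1 A (enum_base_vectors l)) = mxrank01 md A.
Proof.
have /bigcupP [B /is_baseP baseB yB] := enum_valP l.
by rewrite augment1E; apply/mxrank01_augmentP; exists B => // _; apply: spans_mem.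
Qed.

Lemma universal_base_of_augment_base_vectors :
  mxrank01 md (augment A enum_base_vectors) = mxrank01 md A ->
  has_universal_base md A.
Proof.
move=> /mxrank01_augmentP [B baseB spB]; exists B; split=> // B' baseB' y yB'.
have yX : y \in base_vectors by apply/bigcupP; exists B'; first apply/is_baseP.
by have := spB (enum_rank_in yX y); rewrite /enum_base_vectors enum_rankK_in.
Qed.

End UniversalBase.

Theorem theorem1 (md : rank_mode) (n m : nat) (A : 'M[bool]_(n, m)) :
  (has_universal_base md A ->
     forall (t : nat) (x : 'I_t -> 'cV[bool]_n),
       (forall i, mxrank01 md (augment1 A (x i)) = mxrank01 md A) ->
       mxrank01 md (augment A x) = mxrank01 md A)
  /\
  (~ has_universal_base md A ->
     exists (t : nat) (x : 'I_t -> 'cV[bool]_n),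
       (forall i, mxrank01 md (augment1 A (x i)) = mxrank01 md A) /\
       mxrank01 md A < mxrank01 md (augment A x))
  /\
  (augmentation_property md A <-> has_universal_base md A).
Proof.
split; first exact: universal_base_augmentation.
split.
  move=> not_univ; exists _, (@enum_base_vectors md n m A).
  split; first exact: mxrank01_augment1_base_vector.
  rewrite ltn_neqAle mxrank01_augment_ge andbT eq_sym.
  by apply: contra_notN not_univ => /eqP /universal_base_of_augment_base_vectors.
split=> [aug | ]; last exact: universal_base_augmentation.
by apply/universal_base_of_augment_base_vectors/aug/mxrank01_augment1_base_vector.
Qed.
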